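(* Let $\mathcal{X},\mathcal{Y}$ be finite, $p(X,Y)\in\Delta_{\mathcal{X}\times\mathcal{Y}}$ of full support, $\mathcal{T}=\mathbb{N}$, $\mathcal{E}_{\mathrm{ce}}:=\{r(X)\,\mathcal{U}(\mathcal{Y}) : r\in\Delta_{\mathcal{X}}\}$, and let $\mathrm{DIB}_{\mathrm{ce}}(\lambda)$ denote the DIB problem on $\mathcal{A}=\mathcal{X}\times\mathcal{Y}$ with exponential family $\mathcal{E}_{\mathrm{ce}}$ and unconstrained encoders $C=C(\mathcal{X}\times\mathcal{Y},\mathcal{T})$. Let $\Lambda:=D(p\|\mathcal{E}_{\mathrm{ce}})$. Then for all $(\sigma,\tau)\in\mathrm{Bij}(\mathcal{X})\times\mathrm{Bij}(\mathcal{Y})$: (i) if $\kappa\in\mathrm{DIB}_{\mathrm{ce}}(\Lambda)$, then $(\sigma,\tau)\in G_{\mathrm{ce}}$ if and only if $\kappa\circ(\sigma\otimes\tau)=\kappa$; (ii) if $(\sigma,\tau)\in G_{\mathrm{ce}}$, then $\kappa\circ(\sigma\otimes\tau)=\kappa$ for every $0\le\lambda\le\Lambda$ and every $\kappa\in\mathrm{DIB}_{\mathrm{ce}}(\lambda)$; (iii) the projection $\pi$ associated with the equivalence relation $(x,y)\sim(x',y')\iff p(y|x)=p(y'|x')$ does not coincide with the projection on $G_{\mathrm{ce}}$-orbits in general: there exist finite $\mathcal{X},\mathcal{Y}$ and a full-support $p(X,Y)$ for which $\pi\neq\pi_{\mathrm{ce}}$ (e.g. $|\mathcal{X}|=3$,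 $|\mathcal{Y}|=2$).
   Context: $\mathcal{U}(\mathcal{Y})$ is the uniform distribution; $(\sigma\otimes\tau)(x,y)=(\sigma(x),\tau(y))$. The channel equivariance group $G_{\mathrm{ce}}$ is the group of pairs $(\sigma,\tau)\in\mathrm{Bij}(\mathcal{X})\times\mathrm{Bij}(\mathcal{Y})$ with $p(Y|X)\circ\sigma=\tau\circ p(Y|X)$, equivalently $p(\tau(y)|\sigma(x))=p(y|x)$ for all $x,y$; $\pi_{\mathrm{ce}}$ is the projection onto $G_{\mathrm{ce}}$-orbits of $\mathcal{X}\times\mathcal{Y}$. DIB problem: for finite $\mathcal{A}$, $p\in\Delta_{\mathcal{A}}$, exponential family $\mathcal{E}\subseteq\Delta_{\mathcal{A}}$ with closure $\mathrm{cl}\,\mathcal{E}$, encoder set $C\subseteq C(\mathcal{A},\mathcal{T})$, $D(p\|\mathcal{E}):=\inf_{r\in\mathrm{cl}\mathcal{E}}D(p\|r)$, $D(\kappa\cdot p\|\kappa\cdot\mathcal{E}):=\inf_{r\in\mathrm{cl}\mathcal{E}}D(\kappa\cdot p\|\kappa\cdot r)$ where $(\kappa\cdot r)(t)=\sum_a\kappa(t|a)r(a)$, and $\mathrm{DIB}(\lambda):=\operatorname{argmin}\{I_\kappa(A;T):\kappa\in C,\ D(\kappa\cdot p\|\kappa\cdot\mathcal{E})\ge\lambda\}$ for $0\le\lambda\le D(p\|\mathcal{E})$, with $I_\kappa$ computed from $p(a)\kappa(t|a)$. Channels compose by $(\mu\circ\kappa)(c|a)=\sum_b\mu(c|b)\kappa(b|a)$;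 bijections are deterministic channels. *)

From HB Require Import structures.
From mathcomp Require Import all_boot all_order all_algebra all_fingroup.
From mathcomp Require Import all_classical all_reals all_analysis.
Set Implicit Arguments. Unset Strict Implicit. Unset Printing Implicit Defensive.
Import Order.TTheory GRing.Theory Num.Theory.
Import numFieldNormedType.Exports.
Local Open Scope ring_scope.
Local Open Scope classical_set_scope.

Section DIB.
Variable R : realType.

Definition is_dist (A : finType) (r : A -> R) : Prop :=
  (forall a, 0 <= r a) /\ \sum_(a : A) r a = 1.

Definition kl_term (x y : R) : \bar R :=
  if x == 0 then 0%E else if y == 0 then +oo%E else (x * ln (x / y))%:E.

Definition KL (A : finType) (P Q : A -> R) : \bar R :=
  (\sum_(a : A) kl_term (P a) (Q a))%E.

Definition KLnat (P Q : nat -> R) : \bar R :=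
  (\sum_(t <oo) kl_term (P t) (Q t))%E.

Definition is_channel (A : finType) (k : A -> nat -> R) : Prop :=
  (forall a t, 0 <= k a t) /\
  (forall a, (fun n => \sum_(0 <= t < n) k a t) @ \oo --> (1 : R)).

Definition push (A : finType) (k : A -> nat -> R) (r : A -> R) : nat -> R :=
  fun t => \sum_(a : A) k a t * r a.

(* Mutual information I_kappa(A;T) computed from p(a) kappa(t|a):
   D(p(a)kappa(t|a) || p(a) (kappa.p)(t)), summed over a, then over t. *)
Definition mutinf (A : finType) (p : A -> R) (k : A -> nat -> R) : \bar R :=
  (\sum_(t <oo) \sum_(a : A) kl_term (p a * k a t) (p a * push k p t))%E.

(* Topological closure of a set of distributions on a finite set
   (pointwise = norm topology on R^A), via sequences. *)
Definition clos (A : finType) (E : set (A -> R)) : set (A -> R) :=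
  [set r | exists u : nat -> (A -> R), (forall n, E (u n)) /\
           forall a, (fun n => u n a) @ \oo --> r a].

Definition Dfam (A : finType) (p : A -> R) (E : set (A -> R)) : \bar R :=
  ereal_inf [set KL p r | r in clos E].

Definition Dfam_push (A : finType) (k : A -> nat -> R) (p : A -> R)
  (E : set (A -> R)) : \bar R :=
  ereal_inf [set KLnat (push k p) (push k r) | r in clos E].

Definition DIB (A : finType) (p : A -> R) (E : set (A -> R)) (lam : \bar R)
  : set (A -> nat -> R) :=
  [set k | [/\ is_channel k, (lam <= Dfam_push k p E)%E &
     forall k', is_channel k' -> (lam <= Dfam_push k' p E)%E ->
                (mutinf p k <= mutinf p k')%E]].

Definition E_ce (X Y : finType) : set ((X * Y)%type -> R) :=
  [set q | exists r : X -> R, is_dist r /\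
           q = fun a => r a.1 / #|Y|%:R].

Definition cond (X Y : finType) (p : (X * Y)%type -> R) (x : X) (y : Y) : R :=
  p (x, y) / \sum_(y' : Y) p (x, y').

Definition in_Gce (X Y : finType) (p : (X * Y)%type -> R)
  (s : {perm X}) (u : {perm Y}) : Prop :=
  forall x y, cond p (s x) (u y) = cond p x y.

Definition comp_bij (X Y : finType) (k : (X * Y)%type -> nat -> R)
  (s : {perm X}) (u : {perm Y}) : (X * Y)%type -> nat -> R :=
  fun a t => k (s a.1, u a.2) t.

Definition cond_equiv (X Y : finType) (p : (X * Y)%type -> R)
  (a a' : (X * Y)%type) : Prop :=
  cond p a.1 a.2 = cond p a'.1 a'.2.

Definition same_orbit_ce (X Y : finType) (p : (X * Y)%type -> R)
  (a a' : (X * Y)%type) : Prop :=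
  exists (s : {perm X}) (u : {perm Y}), in_Gce p s u /\ a' = (s a.1, u a.2).

End DIB.

From HB Require Import structures.
From mathcomp Require Import all_boot all_order all_algebra all_fingroup.
From mathcomp Require Import all_classical all_reals all_analysis.
From mathcomp Require Import ring lra.
Import Order.TTheory GRing.Theory Num.Theory.
Import numFieldNormedType.Exports.
Local Open Scope ring_scope.
Local Open Scope classical_set_scope.
Set Implicit Arguments. Unset Strict Implicit. Unset Printing Implicit Defensive.

(* (ii) and the "if" part of (i): for (s, u) in G_ce, average an encoder k over
   the cyclic group generated by s (x) u, weighting each row by p.  The averaged
   encoder pushes any r forward as k pushes an averaged r; this averaging fixes p
   and, because p(y|x) is invariant, maps E_ce into itself, so the constraint
   D(k.p || k.E_ce) can only grow.  By strict convexity of x ln x the mutual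
   information strictly drops unless k o (s (x) u) = k, hence every minimiser is
   invariant.

   "Only if" part of (i): the reverse I-projection of p onto E_ce is
   q = p(x) U(y), so Lam >= D(p || q).  If k o (s (x) u) = k, then k sends (x, y)
   and (s x, u y) to a common output; by the strict data processing inequality,
   unless p(.|.) agrees at these points, D(k.p || k.q) < D(p || q) <= Lam,
   contradicting the constraint at lam = Lam. *)

Section RelativeEntropy.
Variable R : realType.
Implicit Types x y z : R.

(* The real-valued [kl_term]; for [y = 0 < x] it is the junk value
   [x * ln (x / 0) = x * ln 0 = 0]. *)
Definition relent x y : R := if x == 0 then 0 else x * ln (x / y).

Lemma relent0l y : relent 0 y = 0.
Proof. by rewrite /relent eqxx. Qed.

Lemma relentE x y : 0 < x -> 0 < y -> relent x y = x * (ln x - ln y).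
Proof. by move=> x0 y0; rewrite /relent gt_eqF // ln_div ?posrE. Qed.

Lemma relentxx x : relent x x = 0.
Proof.
have [->|x0] := eqVneq x 0; first exact: relent0l.
by rewrite /relent (negbTE x0) divff // ln1 mulr0.
Qed.

Lemma kl_termE x y : 0 <= x -> (0 < x -> 0 < y) -> kl_term x y = (relent x y)%:E.
Proof.
move=> x0 xy; rewrite /kl_term /relent; have [//|x_neq0] := eqVneq x 0.
by rewrite gt_eqF // xy // lt_def x_neq0.
Qed.

Lemma ln_le_subr1 z : 0 < z -> ln z <= z - 1.
Proof. by move=> z0; have := expR_ge1Dx (ln z); rewrite lnK ?posrE //; lra. Qed.

Lemma ln_lt_subr1 z : 0 < z -> z != 1 -> ln z < z - 1.
Proof.
move=> z0 z1; have /expR_gt1Dx : ln z != 0 by rewrite ln_eq0.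
by rewrite lnK ?posrE //; lra.
Qed.

Lemma relent_ge_subr x y : 0 <= x -> 0 < y -> x - y <= relent x y.
Proof.
move=> x0 y0; have [->|x_neq0] := eqVneq x 0.
  by rewrite relent0l sub0r oppr_le0 ltW.
have {x_neq0 x0} x0 : 0 < x by rewrite lt_def x_neq0.
have xyx : x * (y / x - 1) = y - x by rewrite mulrBr mulr1 mulrCA divff ?gt_eqF ?mulr1.
have := ln_le_subr1 (divr_gt0 y0 x0); rewrite ln_div ?posrE //.
move/(ler_wpM2l (ltW x0)); rewrite xyx relentE // !mulrBr; lra.
Qed.

Lemma relent_eq_subr x y : 0 <= x -> 0 < y -> relent x y = x - y -> x = y.
Proof.
move=> x0 y0 e; apply/eqP/negPn/negP => xy.
have [x_eq0|x_neq0] := eqVneq x 0.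
  by move: e; rewrite x_eq0 relent0l sub0r => /eqP; rewrite eq_sym oppr_eq0 gt_eqF.
have {x_neq0 x0} x0 : 0 < x by rewrite lt_def x_neq0.
have yx1 : y / x != 1.
  by apply: contra xy => /eqP/(congr1 ( *%R^~ x)) /=; rewrite divfK ?lt0r_neq0 // mul1r => ->.
have xyx : x * (y / x - 1) = y - x by rewrite mulrBr mulr1 mulrCA divff ?gt_eqF ?mulr1.
have := ln_lt_subr1 (divr_gt0 y0 x0) yx1; rewrite ln_div ?posrE //.
rewrite -(ltr_pM2l x0) xyx; move: e; rewrite relentE // !mulrBr; lra.
Qed.

Lemma kl_term_ge_subr x y : 0 <= x -> 0 <= y -> ((x - y)%:E <= kl_term x y)%E.
Proof.
move=> x0 y0; rewrite /kl_term; have [->|x_neq0] := eqVneq x 0.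
  by rewrite sub0r lee_fin oppr_le0.
have [_|y_neq0] := eqVneq y 0; first exact: leey.
have y_gt0 : 0 < y by rewrite lt_def y_neq0.
by have := relent_ge_subr x0 y_gt0; rewrite /relent (negbTE x_neq0) lee_fin.
Qed.

(* The Jensen gap is the weighted sum of the nonnegative terms
   [relent (z i) zb - z i + zb], [zb] the barycentre. *)
Lemma relent_jensen (I : finType) (D : {pred I}) (w z : I -> R) (Q : R) :
  0 < Q -> (forall i, 0 <= w i) -> \sum_(i in D) w i = 1 ->
  (forall i, 0 <= z i) ->
  relent (\sum_(i in D) w i * z i) Q <= \sum_(i in D) w i * relent (z i) Q /\
  (\sum_(i in D) w i * relent (z i) Q = relent (\sum_(i in D) w i * z i) Q ->
     forall i, i \in D -> 0 < w i -> z i = \sum_(i in D) w i * z i).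
Proof.
move=> Q0 w0 w1 z0; set zb := \sum_(i in D) _.
have wz0 i : 0 <= w i * z i by rewrite mulr_ge0.
have [zb0|zb_neq0] := eqVneq zb 0.
  have wz_eq0 := psumr_eq0P (fun i _ => wz0 i) zb0.
  have -> : \sum_(i in D) w i * relent (z i) Q = 0.
    apply: big1 => i iD; have /eqP := wz_eq0 i iD.
    by rewrite mulf_eq0 => /orP[/eqP->|/eqP->]; rewrite ?mul0r ?relent0l ?mulr0.
  rewrite zb0 relent0l; split => // _ i iD wi0.
  by have /eqP := wz_eq0 i iD; rewrite mulf_eq0 gt_eqF //= => /eqP.
have zb_gt0 : 0 < zb by rewrite lt_def zb_neq0 sumr_ge0.
pose gap i := relent (z i) zb - z i + zb.
have gap_ge0 i : 0 <= w i * gap i.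
  by rewrite mulr_ge0 // /gap; have := relent_ge_subr (z0 i) zb_gt0; lra.
have gapE : \sum_(i in D) w i * relent (z i) Q - relent zb Q =
            \sum_(i in D) w i * gap i.
  pose c := ln (zb / Q) + 1.
  have gap_shift i : w i * relent (z i) Q - w i * relent zb Q
                     - c * (w i * z i) + c * zb * w i = w i * gap i.
    rewrite /gap /c (relentE zb_gt0 Q0) ln_div ?posrE //.
    have [->|zi0] := eqVneq (z i) 0; first by rewrite !relent0l; ring.
    have zi_gt0 : 0 < z i by rewrite lt_def zi0 z0.
    by rewrite (relentE zi_gt0 zb_gt0) (relentE zi_gt0 Q0); ring.
  under [RHS]eq_bigr do rewrite -gap_shift.
  rewrite big_split /= !sumrB -mulr_suml -!mulr_sumr w1 -/zb mul1r mulr1.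
  by rewrite subrK.
split; first by rewrite -subr_ge0 gapE sumr_ge0.
move=> /eqP; rewrite -subr_eq0 gapE => /eqP gap_eq0 i iD wi0.
have /eqP := psumr_eq0P (fun j _ => gap_ge0 j) gap_eq0 iD.
rewrite mulf_eq0 gt_eqF //= /gap => /eqP gi0.
by apply: relent_eq_subr => //; lra.
Qed.

End RelativeEntropy.

Section Series.
Variable R : realType.

Lemma cvg_sum_finType (T : finType) (f : T -> nat -> R) (l : T -> R) :
  (forall i, f i n @[n --> \oo] --> l i) -> \sum_i f i n @[n --> \oo] --> \sum_i l i.
Proof. by move=> fl; apply: cvg_big => //; exact: add_continuous. Qed.

Lemma cvg_uniq (v : nat -> R) (l l' : R) : v @ \oo --> l -> v @ \oo --> l' -> l = l'.
Proof. by move=> vl vl'; rewrite -(cvg_lim _ vl) // -(cvg_lim _ vl'). Qed.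

Lemma eseries_EFin (v : nat -> R) (l : R) :
  (fun n => \sum_(0 <= t < n) v t) @ \oo --> l -> (\sum_(t <oo) (v t)%:E)%E = l%:E.
Proof.
move=> vl; under eq_fun do rewrite sumEFin.
by rewrite EFin_lim ?(cvg_lim _ vl) //; apply/cvg_ex; exists l.
Qed.

Lemma eseries_le_eq (a b : nat -> R) :
  (forall t, 0 <= b t) -> (forall t, b t <= a t) ->
  (\sum_(t <oo) (a t)%:E <= \sum_(t <oo) (b t)%:E)%E ->
  (\sum_(t <oo) (a t)%:E < +oo)%E -> forall t, b t = a t.
Proof.
move=> b0 ba sa_le sa_fin t0; apply/eqP; rewrite eq_le ba /= leNgt; apply/negP => ba0.
have ba_ge0 t : (0 <= (a t - b t)%:E)%E by rewrite lee_fin subr_ge0.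
have sa_split : (\sum_(t <oo) (a t)%:E =
          \sum_(t <oo) (b t)%:E + \sum_(t <oo) (a t - b t)%:E)%E.
  rewrite -nneseriesD => [||i _ _]; last by rewrite ba_ge0.
  - by apply: eq_eseriesr => i _; rewrite -EFinD addrC subrK.
  - by move=> i _ _; rewrite lee_fin.
have sd_ge : ((a t0 - b t0)%:E <= \sum_(t <oo) (a t - b t)%:E)%E.
  apply: le_trans (nneseries_lim_ge t0.+1 (fun i _ _ => ba_ge0 i)).
  rewrite big_nat_recr //= sumEFin -EFinD lee_fin lerDr.
  by apply: sumr_ge0 => i _; rewrite subr_ge0.
have sb_fin : (\sum_(t <oo) (b t)%:E)%E \is a fin_num.
  rewrite ge0_fin_numE; last by apply: nneseries_ge0 => n _ _; rewrite lee_fin.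
  apply: le_lt_trans sa_fin; apply: lee_nneseries => n *; rewrite lee_fin //.
move: sa_le; rewrite sa_split; apply/negP; rewrite -ltNge.
apply: (@lt_le_trans _ _ (\sum_(t <oo) (b t)%:E + (a t0 - b t0)%:E)%E).
  by rewrite lteDl // lte_fin subr_gt0.
by rewrite leeD2l.
Qed.

(* The gap series [\sum (F t - g t)] is nondecreasing and bounded, hence
   converges to a positive limit. *)
Lemma eseries_lt_cvg (F g : nat -> R) (L m : R) t0 :
  (fun n => \sum_(0 <= t < n) F t) @ \oo --> L ->
  (forall n, m <= \sum_(0 <= t < n) g t) ->
  (forall t, g t <= F t) -> g t0 < F t0 -> (\sum_(t <oo) (g t)%:E < L%:E)%E.
Proof.
move=> F_cvg g_lb gF gF0.
pose e t := F t - g t; pose E n := \sum_(0 <= t < n) e t.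
have e_ge0 t : 0 <= e t by rewrite subr_ge0.
have E_nd := @nondecreasing_series R e xpredT 0 (fun n _ _ => e_ge0 n).
have E_cvg : cvgn E.
  apply: nondecreasing_is_cvgn E_nd _.
  have [M M_ub] := cvg_has_ub (cvgP _ F_cvg).
  exists (M - m) => _ [n _ <-].
  have F_le : \sum_(0 <= t < n) F t <= M.
    by apply: le_trans (ler_norm _) _; apply: M_ub; exists n.
  by have := g_lb n; rewrite /E sumrB; lra.
have E_lim_gt0 : 0 < limn E.
  have e0_gt0 : 0 < e t0 by rewrite subr_gt0.
  apply: lt_le_trans e0_gt0 (le_trans _ (nondecreasing_cvgn_le E_nd E_cvg t0.+1)).
  by rewrite /E big_nat_recr //= lerDr sumr_ge0.
have g_cvg : (fun n => \sum_(0 <= t < n) g t) @ \oo --> L - limn E.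
  have -> : (fun n => \sum_(0 <= t < n) g t) = (fun n => \sum_(0 <= t < n) F t - E n).
    by apply/funext => n; rewrite /E -sumrB; apply: eq_bigr => t _; rewrite /e opprB subrKC.
  exact: cvgB.
by rewrite (eseries_EFin g_cvg) lte_fin; lra.
Qed.

End Series.

Section Channels.
Variables (R : realType) (A : finType).
Implicit Types (k : A -> nat -> R) (r : A -> R).

Lemma push_ge0 k r t : (forall b, 0 <= k b t) -> (forall b, 0 <= r b) ->
  0 <= push k r t.
Proof. by move=> k0 r0; apply: sumr_ge0 => b _; rewrite mulr_ge0. Qed.

Lemma push_ge_term k r t a : (forall b, 0 <= k b t) -> (forall b, 0 <= r b) ->
  k a t * r a <= push k r t.
Proof.
move=> k0 r0; rewrite /push (bigD1 a) //= lerDl.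
by apply: sumr_ge0 => b _; rewrite mulr_ge0.
Qed.

Lemma push_eq0 k r t : (forall b, 0 <= k b t) -> (forall b, 0 < r b) ->
  push k r t = 0 -> forall b, k b t = 0.
Proof.
move=> k0 r0 kr0 b; apply/eqP; rewrite eq_le k0 andbT.
have := push_ge_term b k0 (fun b => ltW (r0 b)).
by rewrite kr0 pmulr_lle0.
Qed.

Lemma channel_psum_le1 k a n : is_channel k -> \sum_(0 <= t < n) k a t <= 1.
Proof.
case=> k0 k1; have k_nd := @nondecreasing_series R (k a) xpredT 0 (fun t _ _ => k0 a t).
have := nondecreasing_cvgn_le k_nd (cvgP _ (k1 a)) n.
by rewrite (cvg_lim _ (k1 a)).
Qed.

Lemma channel_row_pos k a : is_channel k -> exists t, 0 < k a t.
Proof.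
case=> k0 k1; apply/not_existsP => kt_le0.
have ka0 t : k a t = 0.
  by apply/eqP; rewrite eq_le k0 andbT leNgt; exact/negP/kt_le0.
suff : (1 : R) = 0 by move/eqP; rewrite oner_eq0.
apply: cvg_uniq (k1 a) _; under eq_fun do rewrite big1 //.
exact: cvg_cst.
Qed.

End Channels.

Section MutualInformation.
Variables (R : realType) (A : finType) (p : A -> R).
Hypotheses (p_pos : forall a, 0 < p a) (p_sum : \sum_a p a = 1).
Implicit Types (k : A -> nat -> R).

Definition mutinf_term k t : R := \sum_a p a * relent (k a t) (push k p t).

Lemma mutinfE k : (forall a t, 0 <= k a t) ->
  mutinf p k = (\sum_(t <oo) (mutinf_term k t)%:E)%E.
Proof.
move=> k0; apply: eq_eseriesr => t _; rewrite -sumEFin; apply: eq_bigr => a _.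
have [ka0|ka_neq0] := eqVneq (k a t) 0.
  by rewrite ka0 mulr0 /kl_term eqxx relent0l mulr0.
have ka_gt0 : 0 < k a t by rewrite lt_def ka_neq0 k0.
have pa0 := p_pos a; have kp_gt0 : 0 < push k p t.
  by apply: lt_le_trans (push_ge_term a (k0^~ t) (fun b => ltW (p_pos b))); rewrite mulr_gt0.
rewrite kl_termE ?mulr_ge0 ?ltW //; last by move=> _; rewrite mulr_gt0.
by congr EFin; rewrite !relentE ?mulr_gt0 // !lnM ?posrE //; ring.
Qed.

Lemma mutinf_term_ge0 k t : (forall a, 0 <= k a t) -> 0 <= mutinf_term k t.
Proof.
move=> k0; rewrite /mutinf_term.
have [kp0|kp_neq0] := eqVneq (push k p t) 0.
  apply: sumr_ge0 => a _.
  by rewrite (push_eq0 k0 p_pos kp0) relent0l mulr0.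
have kp_gt0 : 0 < push k p t by rewrite lt_def kp_neq0 push_ge0 // => b; exact: ltW.
have [+ _] := relent_jensen (D := predT) kp_gt0 (fun a => ltW (p_pos a)) p_sum k0.
have -> : \sum_(a in predT) p a * k a t = push k p t.
  by apply: eq_bigr => a _; rewrite mulrC.
by rewrite relentxx.
Qed.

(* Summed over [t], this bounds [mutinf p k] by the entropy of [p]. *)
Lemma mutinf_term_le k t : (forall a, 0 <= k a t) ->
  mutinf_term k t <= \sum_a (p a * - ln (p a)) * k a t.
Proof.
move=> k0; apply: ler_sum => a _.
have [->|ka_neq0] := eqVneq (k a t) 0; first by rewrite relent0l !mulr0.
have ka_gt0 : 0 < k a t by rewrite lt_def ka_neq0 k0.
have pa0 := p_pos a.
have kp_ge := push_ge_term a k0 (fun b => ltW (p_pos b)).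
have kp_gt0 : 0 < push k p t by apply: lt_le_trans kp_ge; rewrite mulr_gt0.
have := kp_ge; rewrite -ler_ln ?posrE ?mulr_gt0 // lnM ?posrE // => ln_le.
rewrite relentE // mulrAC mulrA; apply: ler_wpM2l; first by rewrite ltW ?mulr_gt0.
lra.
Qed.

Lemma mutinf_lt_pinfty k : is_channel k ->
  (\sum_(t <oo) (mutinf_term k t)%:E < +oo)%E.
Proof.
move=> kc; have k0 := kc.1.
have p_le1 a : p a <= 1.
  by rewrite -p_sum (bigD1 a) //= lerDl sumr_ge0 // => b _; exact: ltW.
have h_ge0 a : 0 <= p a * - ln (p a).
  by rewrite (mulr_ge0 (ltW (p_pos a))) // oppr_ge0 ln_le0.
apply: (@le_lt_trans _ _ (\sum_(t <oo) \sum_a ((p a * - ln (p a)) * k a t)%:E)%E).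
  apply: lee_nneseries => t *; first by rewrite lee_fin mutinf_term_ge0.
  by rewrite sumEFin lee_fin mutinf_term_le.
rewrite nneseries_sum; last by move=> a t _; rewrite lee_fin mulr_ge0.
rewrite (eq_bigr (fun a => (p a * - ln (p a))%:E)); first by rewrite sumEFin ltry.
move=> a _; under eq_eseriesr do rewrite EFinM.
rewrite nneseriesZl => [|t _]; last by rewrite lee_fin.
by rewrite (eseries_EFin (kc.2 a)) mule1.
Qed.

End MutualInformation.

Section DataProcessing.
Variables (R : realType) (A : finType) (p q : A -> R).
Hypotheses (p_pos : forall a, 0 < p a) (q_pos : forall a, 0 < q a).
Hypothesis q_sum : \sum_a q a = 1.
Implicit Types (k : A -> nat -> R).

Lemma KL_posE : KL p q = (\sum_a relent (p a) (q a))%:E.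
Proof.
rewrite /KL -sumEFin; apply: eq_bigr => a _.
by rewrite kl_termE ?ltW.
Qed.

(* Jensen with weights [k a t * q a / push k q t] applied to the ratios [p a / q a]. *)
Lemma relent_push_le k t : (forall a, 0 <= k a t) ->
  relent (push k p t) (push k q t) <= \sum_a k a t * relent (p a) (q a) /\
  (relent (push k p t) (push k q t) = \sum_a k a t * relent (p a) (q a) ->
   forall a b, 0 < k a t -> 0 < k b t -> p a / q a = p b / q b).
Proof.
move=> k0; set P := push k p t; set Q := push k q t.
have [Q0|Q_neq0] := eqVneq Q 0.
  have k_eq0 := push_eq0 k0 q_pos Q0.
  have P0 : P = 0 by rewrite /P /push big1 // => b _; rewrite k_eq0 mul0r.
  rewrite P0 relent0l big1 => [|b _]; last by rewrite k_eq0 mul0r.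
  by split => // _ a b; rewrite k_eq0 ltxx.
have Q_gt0 : 0 < Q by rewrite lt_def Q_neq0 push_ge0 // => b; exact: ltW.
pose w a := k a t * q a / Q.
pose z a := p a / q a.
have w0 a : 0 <= w a by rewrite divr_ge0 ?mulr_ge0 ?(ltW (q_pos a)) ?(ltW Q_gt0).
have w1 : \sum_(a in predT) w a = 1 by rewrite -mulr_suml divff ?gt_eqF.
have z0 a : 0 <= z a by rewrite divr_ge0 ?(ltW (p_pos a)) ?(ltW (q_pos a)).
have [jensen_le jensen_eq] := relent_jensen ltr01 w0 w1 z0.
have zbE : \sum_(a in predT) w a * z a = P / Q.
  rewrite /P /push mulr_suml; apply: eq_bigr => a _; rewrite /w /z.
  by have := q_pos a; move=> qa; field; rewrite !gt_eqF.
have relentPQ : relent P Q = Q * relent (P / Q) 1.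
  have [->|P_neq0] := eqVneq P 0; first by rewrite mul0r !relent0l mulr0.
  rewrite /relent (negbTE P_neq0) mulf_eq0 invr_eq0 (negbTE P_neq0) (negbTE Q_neq0).
  by rewrite divr1 mulrA mulrCA divff ?mulr1.
have relent_sumE : \sum_a k a t * relent (p a) (q a) =
                   Q * \sum_(a in predT) w a * relent (z a) 1.
  rewrite mulr_sumr; apply: eq_bigr => a _; have := q_pos a => qa.
  rewrite /w /z !relentE ?divr_gt0 // ln_div ?posrE // ln1 subr0.
  by field; rewrite !gt_eqF.
rewrite zbE in jensen_le jensen_eq; rewrite relentPQ relent_sumE; split.
  by rewrite ler_wpM2l // ltW.
move=> /(mulfI Q_neq0)/esym/jensen_eq z_eq a b ka kb.
have w_gt0 c : 0 < k c t -> 0 < w c by move=> kc; rewrite divr_gt0 ?mulr_gt0.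
by rewrite -/(z a) -/(z b) (z_eq a _ (w_gt0 a ka)) ?(z_eq b _ (w_gt0 b kb)).
Qed.

Lemma KLnat_push_lt k a b t0 : is_channel k -> 0 < k a t0 -> 0 < k b t0 ->
  p a / q a != p b / q b -> (KLnat (push k p) (push k q) < KL p q)%E.
Proof.
move=> kc ka kb pq_neq; have k0 := kc.1.
pose g t := relent (push k p t) (push k q t).
pose F t := \sum_c k c t * relent (p c) (q c).
have kq_ge0 t : 0 <= push k q t by apply: push_ge0 => // c; exact: ltW.
have KLE : KLnat (push k p) (push k q) = (\sum_(t <oo) (g t)%:E)%E.
  apply: eq_eseriesr => t _; apply: kl_termE => [|kp_gt0].
    by apply: push_ge0 => // c; exact: ltW.
  rewrite lt_def kq_ge0 andbT; apply: contraTneq kp_gt0 => /(push_eq0 (k0^~ t) q_pos) k_eq0.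
  by rewrite /push big1 ?ltxx // => c _; rewrite k_eq0 mul0r.
have F_cvg : (fun n => \sum_(0 <= t < n) F t) @ \oo --> \sum_c relent (p c) (q c).
  under eq_fun do rewrite exchange_big /=.
  apply: cvg_sum_finType => c; under eq_fun do rewrite -mulr_suml.
  by have := cvgMr_tmp (b := relent (p c) (q c)) (kc.2 c); rewrite mul1r; apply.
have g_ge t : - push k q t <= g t.
  have [kq0|kq_neq0] := eqVneq (push k q t) 0.
    rewrite /g kq0 oppr0 /push big1 ?relent0l // => c _.
    by rewrite (push_eq0 (k0^~ t) q_pos kq0) mul0r.
  have kq_gt0 : 0 < push k q t by rewrite lt_def kq_neq0 kq_ge0.
  have kp_ge0 : 0 <= push k p t by apply: push_ge0 => // c; exact: ltW.
  by have := relent_ge_subr kp_ge0 kq_gt0; rewrite /g; lra.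
have g_lb n : -1 <= \sum_(0 <= t < n) g t.
  have kq_le1 : \sum_(0 <= t < n) push k q t <= 1.
    rewrite /push exchange_big /= -q_sum; apply: ler_sum => c _.
    by rewrite -mulr_suml ler_piMl ?(ltW (q_pos c)) ?channel_psum_le1.
  have : - \sum_(0 <= t < n) push k q t <= \sum_(0 <= t < n) g t.
    by rewrite -sumrN; apply: ler_sum => t _.
  lra.
have gF0 : g t0 < F t0.
  rewrite lt_def (relent_push_le (k0^~ t0)).1 andbT; apply: contra pq_neq => /eqP gF.
  by apply/eqP; exact: (relent_push_le (k0^~ t0)).2 (esym gF) a b ka kb.
rewrite KLE KL_posE; apply: eseries_lt_cvg F_cvg g_lb _ gF0 => t.
exact: (relent_push_le (k0^~ t)).1.
Qed.

End DataProcessing.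

Section Marginals.
Variables (R : realType) (X Y : finType) (p : (X * Y)%type -> R).
Hypothesis p_pos : forall a, 0 < p a.

Definition marg (x : X) : R := \sum_(y : Y) p (x, y).

Lemma sum_pair (F : (X * Y)%type -> R) : \sum_a F a = \sum_x \sum_y F (x, y).
Proof. by rewrite pair_bigA; apply: eq_bigr => -[]. Qed.

Lemma sum_constY (c : R) : \sum_(y : Y) c = c * #|Y|%:R.
Proof. by rewrite sumr_const mulr_natr. Qed.

Lemma marg_gt0 (x : X) (y : Y) : 0 < marg x.
Proof.
rewrite /marg (bigD1 y) //=; apply: lt_le_trans (p_pos (x, y)) _.
by rewrite lerDl sumr_ge0 // => y' _; exact: ltW.
Qed.

Lemma cond_gt0 (x : X) (y : Y) : 0 < cond p x y.
Proof. by rewrite divr_gt0 ?(marg_gt0 x y). Qed.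

Lemma p_margE (a : (X * Y)%type) : p a = marg a.1 * cond p a.1 a.2.
Proof. by case: a => x y; rewrite /cond -/(marg x) mulrC divfK ?gt_eqF ?(marg_gt0 x y). Qed.

Hypothesis p_sum : \sum_a p a = 1.

Lemma card_gt0_Y : (0 < #|Y|)%N.
Proof.
apply/card_gt0P; apply/not_existsP => Y0; move: p_sum; rewrite sum_pair big1.
  by move/eqP; rewrite eq_sym oner_eq0.
by move=> x _; rewrite big_pred0 // => y; case: (Y0 y).
Qed.

Lemma cardY_gt0 : (0 : R) < #|Y|%:R.
Proof. by rewrite ltr0n card_gt0_Y. Qed.

Lemma sum_div_cardY (c : R) : \sum_(y : Y) c / #|Y|%:R = c.
Proof. by rewrite sum_constY divfK // gt_eqF // cardY_gt0. Qed.

End Marginals.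

Section TensorPerm.
Variables (X Y : finType) (s : {perm X}) (u : {perm Y}).

Definition tensor_fun (a : X * Y) : X * Y := (s a.1, u a.2).

Lemma tensor_fun_inj : injective tensor_fun.
Proof. by move=> [x y] [x' y'] [/perm_inj -> /perm_inj ->]. Qed.

Definition tensor_perm : {perm X * Y} := perm tensor_fun_inj.

Lemma tensor_permE a : tensor_perm a = (s a.1, u a.2).
Proof. exact: permE. Qed.

Lemma tensor_permX i a : (tensor_perm ^+ i)%g a = ((s ^+ i)%g a.1, (u ^+ i)%g a.2).
Proof.
elim: i a => [|i IH] a; first by rewrite !expg0 !perm1; case: a.
by rewrite !expgSr !permM IH tensor_permE.
Qed.

End TensorPerm.

Lemma in_GceX (R : realType) (X Y : finType) (p : (X * Y)%type -> R)
    (s : {perm X}) (u : {perm Y}) i :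
  in_Gce p s u -> in_Gce p (s ^+ i)%g (u ^+ i)%g.
Proof.
move=> sG; elim: i => [|i IH] x y; first by rewrite !expg0 !perm1.
by rewrite !expgSr !permM sG IH.
Qed.

Section GroupAveraging.
Variables (R : realType) (A : finType) (G : {group {perm A}}) (p : A -> R).
Hypothesis p_pos : forall a, 0 < p a.
Implicit Types (k : A -> nat -> R) (r : A -> R).

Definition orbit_mass (a : A) : R := \sum_(g in G) p (g a).

Definition avg_chan k (a : A) (t : nat) : R :=
  \sum_(g in G) p (g a) / orbit_mass a * k (g a) t.

Definition avg_dist r (b : A) : R := p b * (\sum_(g in G) r (g b)) / orbit_mass b.

Lemma sum_group_mull (h : {perm A}) (F : {perm A} -> R) : h \in G ->
  \sum_(g in G) F (h * g)%g = \sum_(g in G) F g.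
Proof.
by move=> hG; rewrite [RHS](reindex_inj (mulgI h)); apply: eq_bigl => g; rewrite groupMl.
Qed.

Lemma sum_group_inv (F : {perm A} -> R) : \sum_(g in G) F g^-1%g = \sum_(g in G) F g.
Proof. by rewrite [RHS](reindex_inj invg_inj); apply: eq_bigl => g; rewrite groupV. Qed.

Lemma orbit_mass_gt0 a : 0 < orbit_mass a.
Proof.
rewrite /orbit_mass (bigD1 1%g) //= perm1; apply: lt_le_trans (p_pos a) _.
by rewrite lerDl sumr_ge0 // => g _; exact: ltW.
Qed.

Lemma orbit_mass_perm h a : h \in G -> orbit_mass (h a) = orbit_mass a.
Proof.
move=> hG; rewrite /orbit_mass -(sum_group_mull (fun g => p (g a)) hG).
by apply: eq_bigr => g _; rewrite permM.
Qed.

(* Change of variables [b = g a] in a double sum over [A] and [G]. *)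
Lemma sum_orbit_swap (f h : A -> R) :
  \sum_a \sum_(g in G) f a * h (g a) / orbit_mass a =
  \sum_b h b * (\sum_(g in G) f (g b)) / orbit_mass b.
Proof.
rewrite exchange_big /=.
transitivity (\sum_(g in G) \sum_b f (g^-1%g b) * h b / orbit_mass b).
  apply: eq_bigr => g gG; rewrite (reindex_inj (@perm_inj _ g^-1%g)) /=.
  by apply: eq_bigr => b _; rewrite permKV orbit_mass_perm ?groupV.
rewrite exchange_big /=; apply: eq_bigr => b _.
rewrite -(sum_group_inv (fun g => f (g b))) mulr_sumr mulr_suml.
by apply: eq_bigr => g _; ring.
Qed.

Lemma push_avg_chan k r t : push (avg_chan k) r t = push k (avg_dist r) t.
Proof.
transitivity (\sum_a \sum_(g in G) r a * (p (g a) * k (g a) t) / orbit_mass a).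
  by apply: eq_bigr => a _; rewrite mulr_suml; apply: eq_bigr => g _; ring.
rewrite (sum_orbit_swap r (fun b => p b * k b t)).
by apply: eq_bigr => b _; rewrite /avg_dist; ring.
Qed.

Lemma avg_dist_p : avg_dist p = p.
Proof. by apply/funext => b; rewrite /avg_dist mulfK // gt_eqF ?orbit_mass_gt0. Qed.

Lemma avg_dist_ge0 r : (forall a, 0 <= r a) -> forall b, 0 <= avg_dist r b.
Proof.
move=> r0 b; apply: divr_ge0; last exact/ltW/orbit_mass_gt0.
by rewrite mulr_ge0 ?(ltW (p_pos b)) ?sumr_ge0.
Qed.

Lemma sum_avg_dist r : \sum_a avg_dist r a = \sum_a r a.
Proof.
rewrite -(sum_orbit_swap r p); apply: eq_bigr => a _.
by rewrite -mulr_suml -mulr_sumr mulfK // gt_eqF ?orbit_mass_gt0.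
Qed.

Lemma avg_chan_channel k : is_channel k -> is_channel (avg_chan k).
Proof.
case=> k0 k1; split=> [a t|a].
  rewrite sumr_ge0 // => g _.
  by rewrite mulr_ge0 ?divr_ge0 ?(ltW (p_pos _)) ?(ltW (orbit_mass_gt0 _)).
under eq_fun do rewrite exchange_big /=.
have <- : \sum_(g in G) p (g a) / orbit_mass a * 1 = 1.
  under eq_bigr do rewrite mulr1.
  by rewrite -mulr_suml divff // gt_eqF ?orbit_mass_gt0.
apply: cvg_big => [|g _]; first exact: add_continuous.
by under eq_fun do rewrite -mulr_sumr; apply: cvgMl_tmp; exact: k1.
Qed.

Lemma clos_avg_dist (E : set (A -> R)) r :
  (forall r', E r' -> E (avg_dist r')) -> clos E r -> clos E (avg_dist r).
Proof.
move=> E_avg [v [vE v_cvg]]; exists (avg_dist \o v); split=> [n|b]; first exact: E_avg.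
apply: cvgMr_tmp; apply: cvgMl_tmp.
by apply: cvg_big => [|g _]; [exact: add_continuous | exact: v_cvg].
Qed.

Lemma Dfam_push_avg_chan (E : set (A -> R)) k :
  (forall r, E r -> E (avg_dist r)) ->
  (Dfam_push k p E <= Dfam_push (avg_chan k) p E)%E.
Proof.
move=> E_avg; apply/ereal_infP => _ [r rE <-].
have -> : push (avg_chan k) p = push k p.
  by apply/funext => t; rewrite push_avg_chan avg_dist_p.
have -> : push (avg_chan k) r = push k (avg_dist r).
  by apply/funext => t; exact: push_avg_chan.
by apply: ereal_inf_lbound; exists (avg_dist r) => //; exact: clos_avg_dist.
Qed.

Lemma mutinf_term_avg_chan k t : (forall a, 0 <= k a t) ->
  mutinf_term p (avg_chan k) t <= mutinf_term p k t /\
  (mutinf_term p (avg_chan k) t = mutinf_term p k t ->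
     forall g a, g \in G -> k (g a) t = k a t).
Proof.
move=> k0; rewrite /mutinf_term push_avg_chan avg_dist_p.
set Q := push k p t.
have [Q0|Q_neq0] := eqVneq Q 0.
  have k_eq0 := push_eq0 k0 p_pos Q0.
  have avg_eq0 a : avg_chan k a t = 0 by rewrite /avg_chan big1 // => g _; rewrite k_eq0 mulr0.
  split=> [|_ g a _]; last by rewrite !k_eq0.
  by rewrite Q0 !big1 // => a _; rewrite ?avg_eq0 ?k_eq0 relent0l mulr0.
have Q_gt0 : 0 < Q by rewrite lt_def Q_neq0 push_ge0 // => b; exact: ltW.
pose w a (g : {perm A}) := p (g a) / orbit_mass a.
have w_ge0 a g : 0 <= w a g by rewrite divr_ge0 ?(ltW (p_pos _)) ?(ltW (orbit_mass_gt0 _)).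
have w_sum a : \sum_(g in G) w a g = 1.
  by rewrite -mulr_suml divff // gt_eqF ?orbit_mass_gt0.
have J a := relent_jensen Q_gt0 (w_ge0 a) (w_sum a) (fun g => k0 (g a)).
have avgE : \sum_a p a * (\sum_(g in G) w a g * relent (k (g a) t) Q) =
            \sum_b p b * relent (k b t) Q.
  transitivity (\sum_a \sum_(g in G) p a * (p (g a) * relent (k (g a) t) Q) / orbit_mass a).
    by apply: eq_bigr => a _; rewrite mulr_sumr; apply: eq_bigr => g _; rewrite /w; ring.
  rewrite (sum_orbit_swap p (fun b => p b * relent (k b t) Q)); apply: eq_bigr => b _.
  by rewrite mulfK // gt_eqF ?orbit_mass_gt0.
pose gap a := p a * (\sum_(g in G) w a g * relent (k (g a) t) Q) -
              p a * relent (avg_chan k a t) Q.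
have gap_ge0 a : 0 <= gap a.
  by rewrite subr_ge0 (ler_wpM2l (ltW (p_pos a))) //; exact: (J a).1.
have gap_sumE : \sum_a gap a =
    \sum_b p b * relent (k b t) Q - \sum_a p a * relent (avg_chan k a t) Q.
  by rewrite sumrB avgE.
split; first by rewrite -subr_ge0 -gap_sumE sumr_ge0.
move=> avg_eq g a gG.
have gap_eq0 : \sum_a gap a = 0 by rewrite gap_sumE avg_eq subrr.
have := psumr_eq0P (i := a) (fun b _ => gap_ge0 b) gap_eq0 isT.
rewrite /gap -mulrBr => /eqP; rewrite mulf_eq0 gt_eqF //= subr_eq0 => /eqP /(J a).2 k_eq.
have w_gt0 g' : 0 < w a g' by rewrite divr_gt0 ?orbit_mass_gt0.
by rewrite (k_eq g gG (w_gt0 g)) -(k_eq 1%g (group1 G) (w_gt0 1%g)) perm1.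
Qed.

Lemma DIB_avg_invariant (E : set (A -> R)) (lam : \bar R) k :
  \sum_a p a = 1 -> (forall r, E r -> E (avg_dist r)) ->
  DIB p E lam k -> forall g a t, g \in G -> k (g a) t = k a t.
Proof.
move=> p_sum E_avg [kc k_lam k_min] g a t gG.
have avg_kc := avg_chan_channel kc.
have := k_min _ avg_kc (le_trans k_lam (Dfam_push_avg_chan k E_avg)).
rewrite (mutinfE p_pos kc.1) (mutinfE p_pos avg_kc.1) => I_le.
have term_le t' := mutinf_term_avg_chan (kc.1^~ t').
have term_eq := eseries_le_eq (fun t' => mutinf_term_ge0 p_pos p_sum (avg_kc.1^~ t'))
  (fun t' => (term_le t').1) I_le (mutinf_lt_pinfty p_pos p_sum kc).
exact: (term_le t).2 (term_eq t) g a gG.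
Qed.

End GroupAveraging.

Section ChannelEquivariance.
Variables (R : realType) (X Y : finType) (p : (X * Y)%type -> R).
Hypothesis p_pos : forall a, 0 < p a.
Variables (s : {perm X}) (u : {perm Y}).
Hypothesis su_Gce : in_Gce p s u.

Let G := <[tensor_perm s u]>%G.

Lemma cond_cycle_tensor g x y : g \in G -> cond p (g (x, y)).1 (g (x, y)).2 = cond p x y.
Proof. by case/cycleP => i ->; rewrite tensor_permX in_GceX. Qed.

Lemma fst_cycle_tensor g x y y' : g \in G -> (g (x, y)).1 = (g (x, y')).1.
Proof. by case/cycleP => i ->; rewrite !tensor_permX. Qed.

(* [orbit_mass (x, y) = cond p x y * T (x, y)] with [T] the orbit mass of the
   marginal, so the factor [cond p x y] cancels against [p (x, y)]. *)
Lemma avg_dist_fst r : (forall a b, a.1 = b.1 -> r a = r b) ->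
  forall x y y', avg_dist G p r (x, y) = avg_dist G p r (x, y').
Proof.
move=> r_fst x y y'.
pose T a := \sum_(g in G) marg p (g a).1.
have T_gt0 a : 0 < T a.
  rewrite /T (bigD1 1%g) //= perm1; apply: lt_le_trans (marg_gt0 p_pos a.1 a.2) _.
  by rewrite lerDl sumr_ge0 // => g _; exact: ltW (marg_gt0 p_pos _ (g a).2).
have avg_distE z : avg_dist G p r (x, z) = marg p x * (\sum_(g in G) r (g (x, z))) / T (x, z).
  have massE : orbit_mass G p (x, z) = cond p x z * T (x, z).
    rewrite mulr_sumr; apply: eq_bigr => g gG.
    by rewrite (p_margE p_pos) cond_cycle_tensor // mulrC.
  rewrite /avg_dist massE (p_margE p_pos) /=.
  have := cond_gt0 p_pos x z; have := T_gt0 (x, z) => T0 c0.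
  by field; rewrite !gt_eqF.
rewrite !avg_distE; congr (_ * _ / _); apply: eq_bigr => g gG.
  by apply: r_fst; exact: fst_cycle_tensor.
by rewrite (fst_cycle_tensor x y y' gG).
Qed.

Hypothesis p_sum : \sum_a p a = 1.

Lemma avg_dist_Ece r : E_ce r -> E_ce (avg_dist G p r).
Proof.
case=> rho [[rho0 rho1] ->].
have N0 := cardY_gt0 p_sum.
exists (fun x => \sum_(y : Y) avg_dist G p (fun a => rho a.1 / #|Y|%:R) (x, y)).
split; first split.
- move=> x; apply: sumr_ge0 => y _; apply: avg_dist_ge0 => // a.
  exact: divr_ge0 (rho0 _) (ltW N0).
- rewrite -sum_pair sum_avg_dist // sum_pair -[RHS]rho1.
  by apply: eq_bigr => x _; rewrite /= (sum_div_cardY p_sum).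
- apply/funext => -[x y] /=; set f := avg_dist G p _.
  rewrite (eq_bigr (fun=> f (x, y))) => [|y' _]; last first.
    by apply: avg_dist_fst => a b /= ->.
  by rewrite sum_constY mulfK // gt_eqF.
Qed.

Lemma DIB_comp_bij (lam : \bar R) k : DIB p (@E_ce R X Y) lam k -> comp_bij k s u = k.
Proof.
move=> k_DIB; apply/funext => a; apply/funext => t.
rewrite /comp_bij -tensor_permE.
by apply: (DIB_avg_invariant p_pos p_sum avg_dist_Ece k_DIB); exact: cycle_id.
Qed.

End ChannelEquivariance.

Section ReverseIProjection.
Variables (R : realType) (X Y : finType) (p : (X * Y)%type -> R).
Hypotheses (p_pos : forall a, 0 < p a) (p_sum : \sum_a p a = 1).
Let N : R := #|Y|%:R.

Definition q_ce (a : (X * Y)%type) : R := marg p a.1 / N.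

Lemma q_ce_gt0 a : 0 < q_ce a.
Proof. by rewrite divr_gt0 ?(marg_gt0 p_pos _ a.2) ?(cardY_gt0 p_sum). Qed.

Lemma q_ce_sum : \sum_a q_ce a = 1.
Proof.
rewrite sum_pair -p_sum sum_pair; apply: eq_bigr => x _.
by rewrite /q_ce /= (sum_div_cardY p_sum).
Qed.

Lemma q_ce_clos : clos (@E_ce R X Y) q_ce.
Proof.
exists (fun=> q_ce); split=> [n|a]; last exact: cvg_cst.
exists (marg p); split=> //; split; last by rewrite -p_sum sum_pair.
by move=> x; rewrite sumr_ge0 // => y _; exact: ltW.
Qed.

Lemma p_div_q_ce a : p a / q_ce a = N * cond p a.1 a.2.
Proof.
rewrite /q_ce (p_margE p_pos a); have := marg_gt0 p_pos a.1 a.2.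
by have := cardY_gt0 p_sum; rewrite -/N => N0 m0; field; rewrite !gt_eqF.
Qed.

Lemma clos_EceP r : clos (@E_ce R X Y) r ->
  [/\ forall a, 0 <= r a, forall x y y', r (x, y) = r (x, y') & \sum_a r a = 1].
Proof.
case=> v [vE v_cvg]; have N0 := cardY_gt0 p_sum.
have {}vE n : exists rho : X -> R, is_dist rho /\ v n = fun a => rho a.1 / N by exact: vE.
split.
- move=> a; apply: (closed_cvg _ (@closed_ge _ 0) _ _ (v_cvg a)); apply: nearW => n /=.
  by have [rho [[rho0 _] ->]] := vE n; rewrite divr_ge0 ?(ltW N0).
- move=> x y y'; apply: cvg_uniq (v_cvg (x, y)) _.
  suff -> : (fun n => v n (x, y)) = (fun n => v n (x, y')) by exact: v_cvg.
  by apply/funext => n; have [rho [_ ->]] := vE n.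
- apply: cvg_uniq (cvg_sum_finType (fun a => v_cvg a)) _.
  suff -> : (fun n => \sum_a v n a) = (fun=> 1) by exact: cvg_cst.
  apply/funext => n; have [rho [[_ <-] ->]] := vE n.
  by rewrite sum_pair; apply: eq_bigr => x _; rewrite /= (sum_div_cardY p_sum).
Qed.

(* [q_ce] is the reverse I-projection of [p]; only the inequality is needed. *)
Lemma KL_q_ce_le : (KL p q_ce <= Dfam p (@E_ce R X Y))%E.
Proof.
apply/ereal_infP => _ [r /clos_EceP [r0 r_fst r_sum] <-].
have [[a ra0]|r_neq0] := pselect (exists a, r a = 0).
  have kl_a : kl_term (p a) (r a) = +oo%E by rewrite /kl_term ra0 gt_eqF ?eqxx.
  rewrite [X in (_ <= X)%E]/KL (bigD1 a) //= kl_a addye ?leey // gt_eqF //.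
  apply: (@lt_le_trans _ _ (\sum_(b | b != a) (p b - r b))%:E); first exact: ltNyr.
  rewrite -sumEFin; apply: lee_sum => b _; exact: kl_term_ge_subr (ltW (p_pos b)) (r0 b).
have r_gt0 a : 0 < r a by rewrite lt_def r0 andbT; apply/eqP => ra0; apply: r_neq0; exists a.
rewrite (KL_posE p_pos r_gt0) (KL_posE p_pos q_ce_gt0) lee_fin -subr_ge0 -sumrB.
have ratio_sum : \sum_a p a * (r a / q_ce a) = 1.
  rewrite sum_pair -r_sum sum_pair; apply: eq_bigr => x _.
  have /card_gt0P [y0 _] := card_gt0_Y p_sum.
  have m0 := marg_gt0 p_pos x y0; have N0 := cardY_gt0 p_sum.
  rewrite /q_ce /=; under eq_bigr => y _ do rewrite (r_fst x y y0).
  under [RHS]eq_bigr => y _ do rewrite (r_fst x y y0).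
  rewrite -mulr_suml -/(marg p x) sum_constY -/N.
  by field; rewrite !gt_eqF.
have term_ge a : p a * (1 - r a / q_ce a) <= relent (p a) (r a) - relent (p a) (q_ce a).
  have := ln_le_subr1 (divr_gt0 (r_gt0 a) (q_ce_gt0 a)).
  rewrite ln_div ?posrE ?r_gt0 ?q_ce_gt0 // => /(ler_wpM2l (ltW (p_pos a))).
  by rewrite !relentE ?p_pos ?r_gt0 ?q_ce_gt0 // !mulrBr mulr1; lra.
apply: le_trans (ler_sum _ (fun a _ => term_ge a)).
by under eq_bigr do rewrite mulrBr mulr1; rewrite sumrB p_sum ratio_sum subrr.
Qed.

End ReverseIProjection.

Lemma DIB_Lam_in_Gce (R : realType) (X Y : finType) (p : (X * Y)%type -> R)
    (p_pos : forall a, 0 < p a) (p_sum : \sum_a p a = 1)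
    (s : {perm X}) (u : {perm Y}) (k : (X * Y)%type -> nat -> R) :
  DIB p (@E_ce R X Y) (Dfam p (@E_ce R X Y)) k -> comp_bij k s u = k -> in_Gce p s u.
Proof.
move=> [kc k_Lam _] k_su x y; apply/eqP/negP => /negP cond_neq.
have [t kt_gt0] := channel_row_pos (x, y) kc.
have ksu_gt0 : 0 < k (s x, u y) t by rewrite -[k _ t]/(comp_bij k s u (x, y) t) k_su.
have ratio_neq : p (s x, u y) / q_ce p (s x, u y) != p (x, y) / q_ce p (x, y).
  rewrite !(p_div_q_ce p_pos p_sum) /=.
  by apply: contra cond_neq => /eqP/mulfI -> //; rewrite gt_eqF ?(cardY_gt0 p_sum).
have := KLnat_push_lt p_pos (q_ce_gt0 p_pos p_sum) (q_ce_sum p_sum) kc ksu_gt0 kt_gt0 ratio_neq.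
apply/negP; rewrite -leNgt.
apply: le_trans (KL_q_ce_le p_pos p_sum) (le_trans k_Lam _).
by apply: ereal_inf_lbound; exists (q_ce p) => //; exact: q_ce_clos.
Qed.

Section Counterexample.
Variable R : realType.

(* Weights [30 * p(x, y)], listed row by row; the conditionals are
   [p(.|0) = (.2, .8)], [p(.|1) = (.8, .2)], [p(.|2) = (.3, .7)]. *)
Definition ex_weight (a : 'I_3 * 'I_2) : nat :=
  nth 0 [:: 2; 8; 8; 2; 3; 7] (2 * a.1 + a.2).

Definition ex_p (a : 'I_3 * 'I_2) : R := (ex_weight a)%:R / 30%:R.

Lemma ex_p_gt0 a : 0 < ex_p a.
Proof. by rewrite divr_gt0 // ltr0n; case: a => -[[|[|[|i]]] ?] -[[|[|j]] ?]. Qed.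

Lemma ex_p_sum : \sum_a ex_p a = 1.
Proof. by rewrite sum_pair !big_ord_recl !big_ord0 /ex_p /ex_weight /=; field. Qed.

Lemma ex_cond x y : cond ex_p x y = (ex_weight (x, y))%:R / 10%:R.
Proof.
rewrite /cond /ex_p !big_ord_recl big_ord0 /=.
by case: x => -[|[|[|i]]] ? //; case: y => -[|[|j]] ? //; rewrite /ex_weight /=; field.
Qed.

(* [(0, 0)] and [(1, 1)] share the conditional [.2]; a pair [(s, u)] in [G_ce]
   moving one to the other has [u 0 = 1], and then the conditional [.3] of
   [(2, 0)] would have to appear in column [1], which it does not. *)
Lemma ex_cond_equiv_not_orbit :
  ~ (forall a a', cond_equiv ex_p a a' <-> same_orbit_ce ex_p a a').
Proof.
move=> equiv_orbit.
have [s [u [su_Gce [s0 u0]]]] :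
    same_orbit_ce ex_p (ord0, ord0) (inord 1 : 'I_3, inord 1 : 'I_2).
  by apply/equiv_orbit; rewrite /cond_equiv /= !ex_cond /ex_weight /= !inordK.
have := su_Gce (inord 2) ord0; rewrite -u0 !ex_cond.
move=> /(congr1 ( *%R^~ 10%:R)) /=; rewrite !divfK ?pnatr_eq0 // => /eqP.
rewrite eqr_nat /ex_weight /= !inordK //.
by case: (s _) => -[|[|[|i]]].
Qed.

End Counterexample.

Theorem theorem3 (R : realType) (X Y : finType) (p : (X * Y)%type -> R)
  (p_pos : forall a, 0 < p a) (p_sum : \sum_(a : (X * Y)%type) p a = 1) :
  let Lam := Dfam p (@E_ce R X Y) in
  (* (i) *)
  (forall (s : {perm X}) (u : {perm Y}) (k : (X * Y)%type -> nat -> R),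
     DIB p (@E_ce R X Y) Lam k ->
     (in_Gce p s u <-> comp_bij k s u = k)) /\
  (* (ii) *)
  (forall (s : {perm X}) (u : {perm Y}), in_Gce p s u ->
     forall lam : R, 0 <= lam -> (lam%:E <= Lam)%E ->
     forall k, DIB p (@E_ce R X Y) lam%:E k -> comp_bij k s u = k) /\
  (* (iii) *)
  (exists q : ('I_3 * 'I_2)%type -> R,
     (forall a, 0 < q a) /\ \sum_(a : ('I_3 * 'I_2)%type) q a = 1 /\
     ~ (forall a a', cond_equiv q a a' <-> same_orbit_ce q a a')).
Proof.
move=> Lam; split; [|split].
- move=> s u k k_DIB; split=> [su_Gce|].
    exact (DIB_comp_bij p_pos su_Gce p_sum k_DIB).
  exact (DIB_Lam_in_Gce p_pos p_sum k_DIB).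
- move=> s u su_Gce lam _ _ k k_DIB; exact (DIB_comp_bij p_pos su_Gce p_sum k_DIB).
- exists (@ex_p R); split; first exact: ex_p_gt0.
  by split; [exact: ex_p_sum | exact: ex_cond_equiv_not_orbit].
Qed.
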